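(* Let $c\in C(X_A,\mathbb Z)$ be such that $[c]\in H^A_+$ is an order unit of $(H^A,H^A_+)$ (e.g. $c=l-k$ for a suspension triplet $(l,k,b)$). Then for every $m\in\mathbb N$ there exists $n_m\in\mathbb N$ such that $c^{n_m}(x)\ge m$ for all $x\in X_A$.
   Context: Let $N>1$ and $A$ an irreducible $N\times N$ $\{0,1\}$-matrix which is not a permutation matrix. $X_A$ is the compact space of sequences $(x_n)_{n\in\mathbb N}$, $x_n\in\{1,\dots,N\}$, $A(x_n,x_{n+1})=1$, and $\sigma_A((x_n)_n)=(x_{n+1})_n$. $H^A$ is the quotient of $C(X_A,\mathbb Z)$ by $\{u-u\circ\sigma_A: u\in C(X_A,\mathbb Z)\}$, $[f]$ the class of $f$, $H^A_+=\{[f]: f\in C(X_A,\mathbb Z_+)\}$ ($\mathbb Z_+$ the nonnegative integers); $[f]\in H^A_+$ is an order unit if for every $[u]\in H^A$ there is $n\in\mathbb N$ with $n[f]-[u]\in H^A_+$. For $m\in\mathbb N$, $c^m(x)=\sum_{i=0}^{m-1}c(\sigma_A^i(x))$. A suspension triplet is $(l,k,b)$ with $l,k$ continuous nonnegative real-valued, $b$ continuous real-valued, $l-k$ integer-valued with order-unit class, and $l-b$, $k-b\circ\sigma_A$ $\mathbb Z_+$-valued. *)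

From mathcomp Require Import all_boot all_order all_algebra all_fingroup.
Set Implicit Arguments. Unset Strict Implicit. Unset Printing Implicit Defensive.
Import Order.TTheory GRing.Theory Num.Theory.
Local Open Scope ring_scope.

Fixpoint mxpow (N : nat) (A : 'M[int]_N) (n : nat) : 'M[int]_N :=
  match n with
  | 0 => 1%:M
  | n'.+1 => mxpow A n' *m A
  end.

Definition zero_one_mx (N : nat) (A : 'M[int]_N) : Prop :=
  forall i j, A i j = 0 \/ A i j = 1.

Definition irreducible_mx (N : nat) (A : 'M[int]_N) : Prop :=
  forall i j, exists n : nat, (0 < n)%N /\ 0 < mxpow A n i j.

Definition inXA (N : nat) (A : 'M[int]_N) (x : nat -> 'I_N) : Prop :=
  forall n, A (x n) (x n.+1) = 1.

Definition shift (N : nat) (x : nat -> 'I_N) : nat -> 'I_N := fun n => x n.+1.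

(* Continuity of f : X_A -> Z (product topology on X_A, discrete topology on Z):
   f is locally constant, i.e. near each point it depends only on finitely many
   coordinates.  Values of f outside X_A are irrelevant. *)
Definition contXA (N : nat) (A : 'M[int]_N) (f : (nat -> 'I_N) -> int) : Prop :=
  forall x, inXA A x -> exists k : nat, forall y, inXA A y ->
    (forall i, (i < k)%N -> y i = x i) -> f y = f x.

Definition cohom (N : nat) (A : 'M[int]_N) (f g : (nat -> 'I_N) -> int) : Prop :=
  exists u, contXA A u /\ forall x, inXA A x -> f x - g x = u x - u (shift x).

Definition in_HApos (N : nat) (A : 'M[int]_N) (f : (nat -> 'I_N) -> int) : Prop :=
  exists g, contXA A g /\ (forall x, inXA A x -> 0 <= g x) /\ cohom A f g.

Definition order_unit (N : nat) (A : 'M[int]_N) (f : (nat -> 'I_N) -> int) : Prop :=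
  in_HApos A f /\
  forall u, contXA A u -> exists n : nat,
    in_HApos A (fun x => f x *+ n - u x).

(* Birkhoff sum c^m(x) = sum_{i<m} c(sigma^i x). *)
Definition bsum (N : nat) (c : (nat -> 'I_N) -> int) (m : nat) (x : nat -> 'I_N) : int :=
  \sum_(i < m) c (iter i (@shift N) x).

(** The order-unit property gives [n] with [n c - 1] cohomologous to some
    [g >= 0], i.e. [n c - 1 = g + u - u o sigma] on [X_A].  Summing along an
    orbit, [n c^k(x) - k = g^k(x) + u(x) - u(sigma^k x) >= -2 |u|], and [u] is
    bounded because [X_A] is compact; hence [c^k >= m] once [k] is large. *)
From mathcomp Require Import all_boot all_order all_algebra all_fingroup.
From mathcomp Require Import zify.
From Stdlib Require Import Classical ClassicalEpsilon.
Import Order.TTheory GRing.Theory Num.Theory.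
Set Implicit Arguments. Unset Strict Implicit.
Local Open Scope ring_scope.

Section Compactness.

Variables (N : nat) (A : 'M[int]_N) (u : (nat -> 'I_N) -> int).

Definition unbounded_on_cylinder (k : nat) (w : nat -> 'I_N) : Prop :=
  forall B : int, exists y, [/\ inXA A y, forall i, (i < k)%N -> y i = w i & B < u y].

Definition set_at (w : nat -> 'I_N) (k : nat) (a : 'I_N) : nat -> 'I_N :=
  fun i => if i == k then a else w i.

(* Pigeonhole on the finite alphabet: a bound on each of the [N] subcylinders
   would bound the cylinder by the sum of their absolute values. *)
Lemma unbounded_on_cylinder_extend k w :
  unbounded_on_cylinder k w -> exists a, unbounded_on_cylinder k.+1 (set_at w k a).
Proof.
move=> unb_w; apply: NNPP => no_ext.
have bnd : forall a : 'I_N, exists B : int, forall y, inXA A y ->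
    (forall i, (i < k.+1)%N -> y i = set_at w k a i) -> u y <= B.
  move=> a; apply: NNPP => unb_a; apply: no_ext; exists a => B.
  apply: NNPP => noy; apply: unb_a; exists B => y Xy yw.
  by rewrite leNgt; apply/negP => ltB; apply: noy; exists y.
have [f fP] := fin_all_exists bnd.
have [y [Xy yw lt_y]] := unb_w (\sum_(a < N) `|f a|).
have yw' : forall i, (i < k.+1)%N -> y i = set_at w k (y k) i.
  move=> i; rewrite ltnS leq_eqVlt => /orP[/eqP->|lt_ik]; rewrite /set_at ?eqxx //.
  by rewrite (ltn_eqF lt_ik) yw.
have le_f : f (y k) <= \sum_(a < N) `|f a|.
  by apply: le_trans (ler_norm _) _; rewrite (bigD1 (y k)) //= lerDl sumr_ge0.
by have := lt_le_trans lt_y (le_trans (fP _ y Xy yw') le_f); rewrite ltxx.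
Qed.

(* König's lemma: an unbounded [u] yields a nested sequence of unbounded
   cylinders whose limit point lies in [X_A], where [u] is not locally
   constant. *)
Lemma contXA_bounded_above : contXA A u -> exists B : int, forall x, inXA A x -> u x <= B.
Proof.
move=> hu; apply: NNPP => no_bound.
have unb : forall B, exists y, inXA A y /\ B < u y.
  move=> B; apply: NNPP => noy; apply: no_bound; exists B => x Xx.
  by rewrite leNgt; apply/negP => ltB; apply: noy; exists x.
have [y0 _] := unb 0.
have unb0 : unbounded_on_cylinder 0 y0.
  by move=> B; have [y [Xy ltB]] := unb B; exists y.
have step : forall kw : nat * (nat -> 'I_N), exists a,
    unbounded_on_cylinder kw.1 kw.2 -> unbounded_on_cylinder kw.1.+1 (set_at kw.2 kw.1 a).
  move=> [k w]; case: (classic (unbounded_on_cylinder k w)) => [/unbounded_on_cylinder_extend[a]|not_unb].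
    by exists a.
  by exists (y0 0%N) => /not_unb.
have [next nextP] := choice _ step.
pose fix W k := if k is k'.+1 then set_at (W k') k' (next (k', W k')) else y0.
have W_unb : forall k, unbounded_on_cylinder k (W k) by elim=> [|k IH] //=; exact: (nextP (k, W k)).
have W_stable : forall k i, (i < k)%N -> W k i = W i.+1 i.
  elim=> [|k IH] i //=; rewrite ltnS leq_eqVlt => /orP[/eqP->|lt_ik] //.
  by rewrite /set_at (ltn_eqF lt_ik) IH.
pose x i := W i.+1 i.
have Xx : inXA A x.
  move=> n; have [y [Xy yW _]] := W_unb n.+2 0.
  by rewrite /x -(W_stable n.+2 n) // -!yW.
have [k uk] := hu _ Xx.
have [y [Xy yW lt_uy]] := W_unb k (u x).
by rewrite (uk y Xy) ?ltxx // in lt_uy => i lt_ik; rewrite yW // /x W_stable.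
Qed.

End Compactness.

Lemma contXA_opp (N : nat) (A : 'M[int]_N) (u : (nat -> 'I_N) -> int) :
  contXA A u -> contXA A (fun x => - u x).
Proof. by move=> hu x Xx; have [k uk] := hu x Xx; exists k => y Xy yx; rewrite uk. Qed.

Lemma contXA_bounded (N : nat) (A : 'M[int]_N) (u : (nat -> 'I_N) -> int) :
  contXA A u -> exists B : nat, forall x, inXA A x -> `|u x| <= B%:R.
Proof.
move=> hu; have [B1 uB1] := contXA_bounded_above hu.
have [B2 uB2] := contXA_bounded_above (contXA_opp hu).
exists (`|B1| + `|B2|)%N => x Xx; have := uB1 x Xx; have := uB2 x Xx.
rewrite natrD !natr_absz; case: (ler0P (u x)) => _; lia.
Qed.

Lemma inXA_iter_shift (N : nat) (A : 'M[int]_N) k x :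
  inXA A x -> inXA A (iter k (@shift N) x).
Proof. by move=> Xx; elim: k => [|k IH] //= n; exact: IH. Qed.

Lemma bsum_coboundary (N : nat) (A : 'M[int]_N) (f g u : (nat -> 'I_N) -> int) k x :
  (forall y, inXA A y -> f y - g y = u y - u (shift y)) -> inXA A x ->
  bsum f k x - bsum g k x = u x - u (iter k (@shift N) x).
Proof.
move=> cob Xx; elim: k => [|k IH]; first by rewrite /bsum !big_ord0 !subrr.
rewrite /bsum !big_ord_recr /= -/(bsum f k x) -/(bsum g k x).
have := cob _ (inXA_iter_shift k Xx) => cob_k.
by rewrite opprD addrACA IH cob_k addrA subrK.
Qed.

Lemma in_HApos_bsum_bounded_below (N : nat) (A : 'M[int]_N) (f : (nat -> 'I_N) -> int) :
  in_HApos A f -> exists B : nat, forall k x, inXA A x -> - B%:R <= bsum f k x.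
Proof.
move=> [g [_ [g_ge0 [u [hu cob]]]]]; have [B uB] := contXA_bounded hu.
exists (B + B)%N => k x Xx.
have := bsum_coboundary k cob Xx.
have : 0 <= bsum g k x by apply: sumr_ge0 => i _; apply/g_ge0/inXA_iter_shift.
have := uB x Xx; have := uB _ (inXA_iter_shift k Xx).
rewrite natrD; set v := u (iter _ _ _); case: (ler0P v); case: (ler0P (u x)); lia.
Qed.

Theorem lemma2p2 (N : nat) (A : 'M[int]_N)
  (hN : (1 < N)%N) (h01 : zero_one_mx A) (hirr : irreducible_mx A)
  (hperm : ~~ is_perm_mx A)
  (c : (nat -> 'I_N) -> int) (hc : contXA A c) (hunit : order_unit A c) :
  forall m : nat, exists nm : nat, forall x, inXA A x -> m%:Z <= bsum c nm x.
Proof.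
move=> m.
have [n pos_nc_1] := hunit.2 (fun _ => 1) (fun x _ => ex_intro _ 0%N (fun _ _ _ => erefl)).
have [B bsum_ge] := in_HApos_bsum_bounded_below pos_nc_1.
exists (n * m + B).+1 => x Xx; have := bsum_ge (n * m + B).+1 x Xx.
rewrite /bsum sumrB sumr_const card_ord sumrMnl -/(bsum c _ x) -mulr_natr.
by move: (bsum c _ x) => S; nia.
Qed.
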